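(* Let $r,s\in\widetilde{\mathbb{K}}_{sm}$. Then (i) $r\widetilde{\mathbb{K}}_{sm}+s\widetilde{\mathbb{K}}_{sm}=(|r|+|s|)\widetilde{\mathbb{K}}_{sm}=(|r|\vee|s|)\widetilde{\mathbb{K}}_{sm}$; (ii) $r\widetilde{\mathbb{K}}_{sm}\cap s\widetilde{\mathbb{K}}_{sm}=(|r|\wedge|s|)\widetilde{\mathbb{K}}_{sm}$.
   Context: Let $I=(0,1]$ and $\mathbb{K}\in\{\mathbb{R},\mathbb{C}\}$. $\widetilde{\mathbb{K}}_{sm}=\mathcal{E}_{M,sm}/\mathcal{N}_{sm}$ where $\mathcal{E}_{M,sm}$ is the set of nets $(r_\varepsilon)_{\varepsilon\in I}\in\mathbb{K}^I$ smooth in $\varepsilon$ with $|r_\varepsilon|=O(\varepsilon^{-N})$ for some $N$, and $\mathcal{N}_{sm}$ those with $|r_\varepsilon|=O(\varepsilon^m)$ for all $m$; $\widetilde{\mathbb{K}}_{co}$ is defined analogously with continuous nets, and $\tau_{sm}:\widetilde{\mathbb{K}}_{sm}\to\widetilde{\mathbb{K}}_{co}$, $[(r_\varepsilon)]\mapsto[(r_\varepsilon)]$, is a ring isomorphism. For $r=[(r_\varepsilon)_\varepsilon]$, $|r|:=\tau_{sm}^{-1}([(|r_\varepsilon|)_\varepsilon])\in\widetilde{\mathbb{R}}_{sm}\subseteq\widetilde{\mathbb{K}}_{sm}$. For $a,b\in\widetilde{\mathbb{R}}_{sm}$: $a\vee b=\tau_{sm}^{-1}([(\max(a_\varepsilon,b_\varepsilon))_\varepsilon])$,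 $a\wedge b=\tau_{sm}^{-1}([(\min(a_\varepsilon,b_\varepsilon))_\varepsilon])$. *)

From Stdlib Require Import Reals.
From Coquelicot Require Import Coquelicot.
Open Scope R_scope.

Inductive Kfield := KR | KC.

(** A net (r_eps)_{eps in I}, I = (0,1], with values in C; values outside I
    only serve as a smooth extension beyond eps = 1. *)
Definition net := R -> C.

(** C^infinity on (0,1]: infinitely differentiable on an open interval
    (0, 1+d) containing I. *)
Definition smoothR (f : R -> R) : Prop :=
  exists d : R, 0 < d /\ forall (n : nat) (x : R), 0 < x < 1 + d -> ex_derive_n f n x.

Definition smooth_net (u : net) : Prop :=
  smoothR (fun e => Re (u e)) /\ smoothR (fun e => Im (u e)).

Definition K_valued (K : Kfield) (u : net) : Prop :=
  match K with
  | KC => True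
  | KR => forall e, 0 < e <= 1 -> Im (u e) = 0
  end.

Definition moderate (u : net) : Prop :=
  exists (N : nat) (M e0 : R), 0 < e0 <= 1 /\
    forall e, 0 < e <= e0 -> Cmod (u e) <= M * / (e ^ N).

Definition negligible (u : net) : Prop :=
  forall m : nat, exists (M e0 : R), 0 < e0 <= 1 /\
    forall e, 0 < e <= e0 -> Cmod (u e) <= M * e ^ m.

Definition EMsm (K : Kfield) (u : net) : Prop :=
  K_valued K u /\ smooth_net u /\ moderate u.

(** equality in the quotient K~_sm = E_{M,sm}/N_sm *)
Definition net_eq (u v : net) : Prop := negligible (fun e => (u e - v e)%C).

(** a is a representative of |r| = tau_sm^{-1}([(|r_eps|)]) in R~_sm *)
Definition is_abs (r a : net) : Prop :=
  EMsm KR a /\ net_eq a (fun e => RtoC (Cmod (r e))).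

(** m represents a \/ b = tau_sm^{-1}([(max(a_eps,b_eps))]) *)
Definition is_max (a b m : net) : Prop :=
  EMsm KR m /\ net_eq m (fun e => RtoC (Rmax (Re (a e)) (Re (b e)))).

(** m represents a /\ b = tau_sm^{-1}([(min(a_eps,b_eps))]) *)
Definition is_min (a b m : net) : Prop :=
  EMsm KR m /\ net_eq m (fun e => RtoC (Rmin (Re (a e)) (Re (b e)))).

Definition in_principal (K : Kfield) (g x : net) : Prop :=
  exists c, EMsm K c /\ net_eq x (fun e => (g e * c e)%C).

Definition in_sum_ideal (K : Kfield) (r s x : net) : Prop :=
  exists c d, EMsm K c /\ EMsm K d /\
    net_eq x (fun e => (r e * c e + s e * d e)%C).

Definition net_add (u v : net) : net := fun e => (u e + v e)%C.

(* Membership in a principal ideal of K~_sm is a growth condition: [x] lies in [g K~_sm] iff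
   |x_e| <= C e^-N |g_e| + n_e with [n] negligible ([dominated]).  Necessity is immediate; for
   sufficiency [x] is divided by [g] smoothly, the witness [x conj(g) / (|g|^2 + Q exp(-|g|^2/(Q e^2)))]
   leaving a negligible residual.  Since [|r|], [|s|] are represented by nets close to |r_e|, |s_e|,
   the proposition reduces to the pointwise comparisons
   |r_e|, |s_e| <= |r_e| + |s_e| <= 2 max(|r_e|, |s_e|), to the fact that what is dominated by both
   |r| and |s| is dominated by min(|r|, |s|), and, in (i), to x = r c + s d. *)

From Stdlib Require Import Reals Lra Lia.
From Coquelicot Require Import Coquelicot.
Open Scope R_scope.

(* Unlike [ex_derive_n], this recursive form ([Derive f] is again [n - 1] times derivable)
   is closed under products and quotients by a direct induction on [n]. *)
Fixpoint derivable_n_on (n : nat) (D : R -> Prop) (f : R -> R) : Prop :=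
  match n with
  | O => True
  | S n => (forall x, D x -> ex_derive f x) /\ derivable_n_on n D (Derive f)
  end.

Section DerivableOn.

Variable D : R -> Prop.
Hypothesis D_open : open D.

Lemma derivable_n_on_pred n f : derivable_n_on (S n) D f -> derivable_n_on n D f.
Proof.
  revert f; induction n as [|n IH]; intros f [Hf HDf]; simpl; auto.
Qed.

Lemma derivable_n_on_ext n f g :
  (forall x, D x -> f x = g x) -> derivable_n_on n D f -> derivable_n_on n D g.
Proof.
  revert f g; induction n as [|n IH]; intros f g Efg; simpl; auto.
  intros [Hf HDf].
  assert (near_eq : forall x, D x -> locally x (fun y => f y = g y)).
  { intros x Dx; apply (filter_imp D); [exact Efg | exact (D_open x Dx)]. }
  split.
  - intros x Dx; apply (ex_derive_ext_loc f); auto.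
  - apply (IH (Derive f)); auto.
    intros x Dx; apply Derive_ext_loc; auto.
Qed.

Lemma derivable_n_on_const n c : derivable_n_on n D (fun _ => c).
Proof.
  revert c; induction n as [|n IH]; intros c; simpl; auto.
  split.
  - intros; apply ex_derive_const.
  - apply (derivable_n_on_ext n (fun _ => 0)); auto.
    intros; now rewrite Derive_const.
Qed.

Lemma derivable_n_on_id n : derivable_n_on n D (fun x => x).
Proof.
  destruct n; simpl; auto.
  split.
  - intros; apply ex_derive_id.
  - apply (derivable_n_on_ext n (fun _ => 1)); [|apply derivable_n_on_const].
    intros x _; symmetry; apply Derive_id.
Qed.

Lemma derivable_n_on_plus n f g : derivable_n_on n D f -> derivable_n_on n D g ->
  derivable_n_on n D (fun x => f x + g x).
Proof.
  revert f g; induction n as [|n IH]; intros f g; simpl; auto.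
  intros [Hf HDf] [Hg HDg]; split.
  - intros x Dx; apply (ex_derive_plus f g); auto.
  - apply (derivable_n_on_ext n (fun x => Derive f x + Derive g x)); auto.
    intros x Dx; rewrite Derive_plus; auto.
Qed.

Lemma derivable_n_on_opp n f : derivable_n_on n D f -> derivable_n_on n D (fun x => - f x).
Proof.
  revert f; induction n as [|n IH]; intros f; simpl; auto.
  intros [Hf HDf]; split.
  - intros x Dx; apply (ex_derive_opp f); auto.
  - apply (derivable_n_on_ext n (fun x => - Derive f x)); auto.
    intros x Dx; rewrite Derive_opp; auto.
Qed.

Lemma derivable_n_on_mult n f g : derivable_n_on n D f -> derivable_n_on n D g ->
  derivable_n_on n D (fun x => f x * g x).
Proof.
  revert f g; induction n as [|n IH]; intros f g Hf Hg; simpl; auto.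
  pose proof (derivable_n_on_pred n f Hf) as Hf'.
  pose proof (derivable_n_on_pred n g Hg) as Hg'.
  destruct Hf as [Hf HDf], Hg as [Hg HDg]; split.
  - intros x Dx; apply ex_derive_mult; auto.
  - apply (derivable_n_on_ext n (fun x => Derive f x * g x + f x * Derive g x)).
    + intros x Dx; rewrite Derive_mult; auto.
    + apply derivable_n_on_plus; auto.
Qed.

Lemma derivable_n_on_inv n f : (forall x, D x -> f x <> 0) -> derivable_n_on n D f ->
  derivable_n_on n D (fun x => / f x).
Proof.
  intros f_neq0; revert f f_neq0; induction n as [|n IH]; intros f f_neq0 Hf; simpl; auto.
  pose proof (derivable_n_on_pred n f Hf) as Hf'.
  destruct Hf as [Hf HDf]; split.
  - intros x Dx; apply ex_derive_inv; auto.
  - apply (derivable_n_on_ext n (fun x => - Derive f x * (/ f x * / f x))).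
    + intros x Dx; rewrite Derive_inv; auto; simpl; field; auto.
    + apply derivable_n_on_mult; [apply derivable_n_on_opp | apply derivable_n_on_mult]; auto.
Qed.

Lemma derivable_n_on_exp n f : derivable_n_on n D f -> derivable_n_on n D (fun x => exp (f x)).
Proof.
  revert f; induction n as [|n IH]; intros f Hf; simpl; auto.
  pose proof (derivable_n_on_pred n f Hf) as Hf'.
  destruct Hf as [Hf HDf].
  assert (Hexp : forall x, D x ->
    is_derive (fun y => exp (f y)) x (Derive f x * exp (f x))).
  { intros x Dx; apply (is_derive_comp exp f); [apply is_derive_exp | apply Derive_correct; auto]. }
  split.
  - intros x Dx; eexists; apply Hexp; auto.
  - apply (derivable_n_on_ext n (fun x => Derive f x * exp (f x))).
    + intros x Dx; symmetry; apply is_derive_unique, Hexp; auto.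
    + apply derivable_n_on_mult; auto.
Qed.

Lemma derivable_n_on_subset n (D' : R -> Prop) f :
  (forall x, D' x -> D x) -> derivable_n_on n D f -> derivable_n_on n D' f.
Proof.
  intros sub; revert f; induction n as [|n IH]; intros f; simpl; auto.
  intros [Hf HDf]; split; auto.
Qed.

End DerivableOn.
Lemma Derive_n_Sl f k x : Derive_n f (S k) x = Derive_n (Derive f) k x.
Proof.
  revert x; induction k as [|k IH]; intros x; [reflexivity|].
  apply (Derive_ext (Derive_n f (S k))); exact IH.
Qed.

Lemma ex_derive_n_SSl f k x :
  ex_derive_n f (S (S k)) x <-> ex_derive_n (Derive f) (S k) x.
Proof.
  split; apply ex_derive_ext; intros t; [|symmetry]; apply Derive_n_Sl.
Qed.

Lemma ex_derive_n_of_derivable_n_on n D f x :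
  derivable_n_on n D f -> D x -> ex_derive_n f n x.
Proof.
  revert f; induction n as [|[|n] IH]; intros f Hf Dx; [exact I | apply Hf; exact Dx |].
  apply ex_derive_n_SSl, IH; [apply Hf | exact Dx].
Qed.

Lemma derivable_n_on_of_ex_derive_n n (D : R -> Prop) f :
  (forall k x, D x -> ex_derive_n f k x) -> derivable_n_on n D f.
Proof.
  revert f; induction n as [|n IH]; intros f Hf; [exact I | split].
  - intros x Dx; exact (Hf 1%nat x Dx).
  - apply IH; intros [|k] x Dx; [exact I|].
    apply (proj1 (ex_derive_n_SSl f k x)), (Hf (S (S k)) x Dx).
Qed.

Definition near_I (d : R) : R -> Prop := fun x => 0 < x < 1 + d.

Lemma open_near_I d : open (near_I d).
Proof. apply open_and; [apply open_gt | apply open_lt]. Qed.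

Lemma smoothR_iff f :
  smoothR f <-> exists d, 0 < d /\ forall n, derivable_n_on n (near_I d) f.
Proof.
  split; intros [d [Hd Hf]]; exists d; split; auto; intros n.
  - apply derivable_n_on_of_ex_derive_n; intros k x Dx; apply Hf, Dx.
  - intros x Dx; apply (ex_derive_n_of_derivable_n_on n (near_I d)); auto.
Qed.

Lemma smoothR_common f g : smoothR f -> smoothR g ->
  exists d, 0 < d /\ forall n, derivable_n_on n (near_I d) f /\ derivable_n_on n (near_I d) g.
Proof.
  rewrite !smoothR_iff; intros [d1 [Hd1 Hf]] [d2 [Hd2 Hg]].
  exists (Rmin d1 d2); split; [now apply Rmin_glb_lt|].
  pose proof (Rmin_l d1 d2); pose proof (Rmin_r d1 d2).
  intros n; split.
  - apply (derivable_n_on_subset (near_I d1)); [unfold near_I; intros; lra | apply Hf].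
  - apply (derivable_n_on_subset (near_I d2)); [unfold near_I; intros; lra | apply Hg].
Qed.

Lemma smoothR_plus f g : smoothR f -> smoothR g -> smoothR (fun x => f x + g x).
Proof.
  intros Hf Hg; destruct (smoothR_common f g Hf Hg) as [d [Hd Hfg]].
  apply smoothR_iff; exists d; split; auto; intros n.
  apply derivable_n_on_plus; apply open_near_I || apply Hfg.
Qed.

Lemma smoothR_mult f g : smoothR f -> smoothR g -> smoothR (fun x => f x * g x).
Proof.
  intros Hf Hg; destruct (smoothR_common f g Hf Hg) as [d [Hd Hfg]].
  apply smoothR_iff; exists d; split; auto; intros n.
  apply derivable_n_on_mult; apply open_near_I || apply Hfg.
Qed.

Lemma smoothR_opp f : smoothR f -> smoothR (fun x => - f x).
Proof.
  rewrite !smoothR_iff; intros [d [Hd Hf]]; exists d; split; auto; intros n.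
  apply derivable_n_on_opp; [apply open_near_I | apply Hf].
Qed.

Lemma smoothR_minus f g : smoothR f -> smoothR g -> smoothR (fun x => f x - g x).
Proof. intros Hf Hg; apply smoothR_plus, smoothR_opp; auto. Qed.

Lemma smoothR_inv f : smoothR f -> (forall x, 0 < x -> f x <> 0) -> smoothR (fun x => / f x).
Proof.
  rewrite !smoothR_iff; intros [d [Hd Hf]] f_neq0; exists d; split; auto; intros n.
  apply derivable_n_on_inv; [apply open_near_I | | apply Hf].
  intros x [x_gt0 _]; auto.
Qed.

Lemma smoothR_exp f : smoothR f -> smoothR (fun x => exp (f x)).
Proof.
  rewrite !smoothR_iff; intros [d [Hd Hf]]; exists d; split; auto; intros n.
  apply derivable_n_on_exp; [apply open_near_I | apply Hf].
Qed.

Lemma smoothR_pow p : smoothR (fun x => x ^ p).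
Proof. exists 1; split; [lra|]; intros n x _; apply ex_derive_n_pow. Qed.

Lemma smoothR_id : smoothR (fun x => x).
Proof.
  apply smoothR_iff; exists 1; split; [lra|]; intros n.
  apply derivable_n_on_id, open_near_I.
Qed.

Definition negligibleR (f : R -> R) : Prop :=
  forall m : nat, exists M e0, 0 < e0 <= 1 /\
    forall e, 0 < e <= e0 -> Rabs (f e) <= M * e ^ m.

Definition moderateR (f : R -> R) : Prop :=
  exists (N : nat) M e0, 0 < e0 <= 1 /\
    forall e, 0 < e <= e0 -> Rabs (f e) <= M * / e ^ N.

Lemma Rmin_unit_interval e1 e2 : 0 < e1 <= 1 -> 0 < e2 <= 1 ->
  0 < Rmin e1 e2 <= 1 /\ forall e, 0 < e <= Rmin e1 e2 -> 0 < e <= e1 /\ 0 < e <= e2.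
Proof.
  intros He1 He2; pose proof (Rmin_l e1 e2); pose proof (Rmin_r e1 e2).
  split; [split; [now apply Rmin_glb_lt | lra] | intros; lra].
Qed.

Lemma pow_unit_interval e n : 0 < e <= 1 -> 0 < e ^ n <= 1.
Proof.
  intros He; split; [apply pow_lt; lra|].
  induction n as [|n IH]; simpl; [lra|].
  pose proof (pow_lt e n ltac:(lra)); nra.
Qed.

Lemma pow_le_pow_unit e n m : 0 < e <= 1 -> (n <= m)%nat -> e ^ m <= e ^ n.
Proof.
  intros He Hnm; replace m with (n + (m - n))%nat by lia; rewrite pow_add.
  destruct (pow_unit_interval e n He), (pow_unit_interval e (m - n) He); nra.
Qed.

Lemma negligibleR_le f g : negligibleR g ->
  (exists e0, 0 < e0 <= 1 /\ forall e, 0 < e <= e0 -> Rabs (f e) <= g e) -> negligibleR f.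
Proof.
  intros Hg [e1 [He1 Hfg]] m; destruct (Hg m) as [M [e0 [He0 H]]].
  destruct (Rmin_unit_interval e0 e1 He0 He1) as [He Hboth].
  exists M, (Rmin e0 e1); split; auto; intros e Hee; destruct (Hboth e Hee).
  apply (Rle_trans _ (g e)); [auto|].
  apply (Rle_trans _ (Rabs (g e))); [apply Rle_abs | auto].
Qed.

Lemma moderateR_le f g : moderateR g ->
  (exists e0, 0 < e0 <= 1 /\ forall e, 0 < e <= e0 -> Rabs (f e) <= g e) -> moderateR f.
Proof.
  intros [N [M [e0 [He0 H]]]] [e1 [He1 Hfg]].
  destruct (Rmin_unit_interval e0 e1 He0 He1) as [He Hboth].
  exists N, M, (Rmin e0 e1); split; auto; intros e Hee; destruct (Hboth e Hee).
  apply (Rle_trans _ (g e)); [auto|].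
  apply (Rle_trans _ (Rabs (g e))); [apply Rle_abs | auto].
Qed.

Lemma negligibleR_abs f : negligibleR f -> negligibleR (fun e => Rabs (f e)).
Proof.
  intros Hf m; destruct (Hf m) as [M [e0 [He0 H]]]; exists M, e0; split; auto.
  intros e He; rewrite Rabs_Rabsolu; auto.
Qed.

Lemma moderateR_abs f : moderateR f -> moderateR (fun e => Rabs (f e)).
Proof.
  intros [N [M [e0 [He0 H]]]]; exists N, M, e0; split; auto.
  intros e He; rewrite Rabs_Rabsolu; auto.
Qed.

Lemma negligibleR_plus f g : negligibleR f -> negligibleR g -> negligibleR (fun e => f e + g e).
Proof.
  intros Hf Hg m; destruct (Hf m) as [M1 [e1 [He1 H1]]], (Hg m) as [M2 [e2 [He2 H2]]].
  destruct (Rmin_unit_interval e1 e2 He1 He2) as [He Hboth].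
  exists (M1 + M2), (Rmin e1 e2); split; auto; intros e Hee; destruct (Hboth e Hee).
  pose proof (Rabs_triang (f e) (g e)); pose proof (H1 e ltac:(auto)); pose proof (H2 e ltac:(auto)).
  lra.
Qed.

Lemma negligibleR_mult f g : negligibleR f -> moderateR g -> negligibleR (fun e => f e * g e).
Proof.
  intros Hf [N [M2 [e2 [He2 H2]]]] m; destruct (Hf (m + N)%nat) as [M1 [e1 [He1 H1]]].
  destruct (Rmin_unit_interval e1 e2 He1 He2) as [He Hboth].
  exists (Rabs M1 * Rabs M2), (Rmin e1 e2); split; auto; intros e Hee; destruct (Hboth e Hee).
  specialize (H1 e ltac:(auto)); specialize (H2 e ltac:(auto)); rewrite pow_add in H1.
  pose proof (pow_lt e m ltac:(lra)); pose proof (pow_lt e N ltac:(lra)).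
  assert (Hf' : Rabs (f e) <= Rabs M1 * (e ^ m * e ^ N)).
  { apply (Rle_trans _ _ _ H1), Rmult_le_compat_r; [nra | apply Rle_abs]. }
  assert (Hg' : Rabs (g e) <= Rabs M2 * / e ^ N).
  { apply (Rle_trans _ _ _ H2), Rmult_le_compat_r; [apply Rlt_le, Rinv_0_lt_compat; auto | apply Rle_abs]. }
  rewrite Rabs_mult.
  apply (Rle_trans _ ((Rabs M1 * (e ^ m * e ^ N)) * (Rabs M2 * / e ^ N))).
  - apply Rmult_le_compat; auto using Rabs_pos.
  - apply Req_le; field; lra.
Qed.

Lemma negligibleR_scal c f : negligibleR f -> negligibleR (fun e => c * f e).
Proof.
  intros Hf m; destruct (Hf m) as [M [e0 [He0 H]]]; exists (Rabs c * M), e0; split; auto.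
  intros e He; rewrite Rabs_mult, Rmult_assoc; apply Rmult_le_compat_l; auto using Rabs_pos.
Qed.

Lemma moderateR_plus f g : moderateR f -> moderateR g -> moderateR (fun e => f e + g e).
Proof.
  intros [N1 [M1 [e1 [He1 H1]]]] [N2 [M2 [e2 [He2 H2]]]].
  destruct (Rmin_unit_interval e1 e2 He1 He2) as [He Hboth].
  exists (N1 + N2)%nat, (Rabs M1 + Rabs M2), (Rmin e1 e2); split; auto.
  intros e Hee; destruct (Hboth e Hee).
  specialize (H1 e ltac:(auto)); specialize (H2 e ltac:(auto)).
  destruct (pow_unit_interval e N1 ltac:(lra)), (pow_unit_interval e N2 ltac:(lra)).
  rewrite pow_add.
  assert (/ e ^ N1 <= / (e ^ N1 * e ^ N2)) by (apply Rinv_le_contravar; nra).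
  assert (/ e ^ N2 <= / (e ^ N1 * e ^ N2)) by (apply Rinv_le_contravar; nra).
  pose proof (Rinv_0_lt_compat _ (pow_lt e N1 ltac:(lra))).
  pose proof (Rinv_0_lt_compat _ (pow_lt e N2 ltac:(lra))).
  pose proof (Rle_abs M1); pose proof (Rle_abs M2); pose proof (Rabs_pos M1); pose proof (Rabs_pos M2).
  pose proof (Rabs_triang (f e) (g e)).
  nra.
Qed.

Lemma moderateR_mult f g : moderateR f -> moderateR g -> moderateR (fun e => f e * g e).
Proof.
  intros [N1 [M1 [e1 [He1 H1]]]] [N2 [M2 [e2 [He2 H2]]]].
  destruct (Rmin_unit_interval e1 e2 He1 He2) as [He Hboth].
  exists (N1 + N2)%nat, (Rabs M1 * Rabs M2), (Rmin e1 e2); split; auto.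
  intros e Hee; destruct (Hboth e Hee).
  specialize (H1 e ltac:(auto)); specialize (H2 e ltac:(auto)).
  pose proof (Rinv_0_lt_compat _ (pow_lt e N1 ltac:(lra))).
  pose proof (Rinv_0_lt_compat _ (pow_lt e N2 ltac:(lra))).
  pose proof (Rle_abs M1); pose proof (Rle_abs M2).
  pose proof (Rabs_pos (f e)); pose proof (Rabs_pos (g e)).
  rewrite pow_add, Rabs_mult, Rinv_mult.
  apply (Rle_trans _ ((Rabs M1 * / e ^ N1) * (Rabs M2 * / e ^ N2))); [|lra].
  apply Rmult_le_compat; nra.
Qed.

Lemma moderateR_const c : moderateR (fun _ => c).
Proof. exists 0%nat, (Rabs c), 1; split; [lra|]; intros e He; simpl; lra. Qed.

Lemma moderateR_inv_pow N : moderateR (fun e => / e ^ N).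
Proof.
  exists N, 1, 1; split; [lra|]; intros e He.
  rewrite Rabs_right; [lra | apply Rle_ge, Rlt_le, Rinv_0_lt_compat, pow_lt; lra].
Qed.

Lemma exp_mult_INR m y : exp (INR m * y) = exp y ^ m.
Proof.
  induction m as [|m IH]; [simpl; rewrite Rmult_0_l; apply exp_0|].
  rewrite S_INR, Rmult_plus_distr_r, Rmult_1_l, exp_plus, IH; simpl; ring.
Qed.

(* [exp (c / e) = exp (y) ^ (m + 1) >= y ^ (m + 1)] with [y = c / ((m + 1) e)]. *)
Lemma negligibleR_exp_inv c : 0 < c -> negligibleR (fun e => exp (- c / e)).
Proof.
  intros Hc [|m].
  - exists 1, 1; split; [lra|]; intros e He; simpl.
    rewrite Rabs_right, Rmult_1_r by (apply Rle_ge, Rlt_le, exp_pos).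
    rewrite <- exp_0; apply Rlt_le, exp_increasing.
    pose proof (Rinv_0_lt_compat e ltac:(lra)); unfold Rdiv; nra.
  - set (k := INR (S m)); assert (Hk : 0 < k) by (apply lt_0_INR; lia).
    exists ((k / c) ^ S m), 1; split; [lra|]; intros e He.
    rewrite Rabs_right by (apply Rle_ge, Rlt_le, exp_pos).
    assert (Hy : 0 < c / (k * e)) by (apply Rdiv_lt_0_compat; nra).
    assert (Hz : c / (k * e) < exp (c / (k * e))).
    { pose proof (exp_ineq1 (c / (k * e)) ltac:(lra)); lra. }
    assert (Ex : exp (c / e) = exp (c / (k * e)) ^ S m).
    { rewrite <- exp_mult_INR; fold k; f_equal; field; lra. }
    replace (- c / e) with (- (c / e)) by (field; lra); rewrite exp_Ropp, Ex.
    pose proof (pow_lt _ (S m) Hy).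
    apply (Rle_trans _ (/ (c / (k * e)) ^ S m)).
    + apply Rinv_le_contravar, pow_incr; auto; lra.
    + rewrite <- pow_inv, <- Rpow_mult_distr; apply Req_le; f_equal; field; lra.
Qed.

Lemma C_eq_parts (u v : C) : Re u = Re v -> Im u = Im v -> u = v.
Proof. destruct u, v; simpl; intros -> ->; reflexivity. Qed.

Lemma smooth_net_mult u v : smooth_net u -> smooth_net v -> smooth_net (fun e => (u e * v e)%C).
Proof.
  intros [u1 u2] [v1 v2]; split; simpl.
  - apply smoothR_minus; apply smoothR_mult; auto.
  - apply smoothR_plus; apply smoothR_mult; auto.
Qed.

Lemma smooth_net_plus u v : smooth_net u -> smooth_net v -> smooth_net (fun e => (u e + v e)%C).
Proof. intros [u1 u2] [v1 v2]; split; simpl; apply smoothR_plus; auto. Qed.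

Definition modulus (u : net) : R -> R := fun e => Cmod (u e).

Lemma Rabs_modulus u e : Rabs (modulus u e) = modulus u e.
Proof. apply Rabs_right, Rle_ge, Cmod_ge_0. Qed.

Lemma moderate_iff u : moderate u <-> moderateR (modulus u).
Proof.
  split; intros [N [M [e0 [He0 H]]]]; exists N, M, e0; split; auto;
    intros e He; specialize (H e He); rewrite ?Rabs_modulus in *; auto.
Qed.

Lemma negligible_iff u : negligible u <-> negligibleR (modulus u).
Proof.
  split; intros H m; destruct (H m) as [M [e0 [He0 Hm]]]; exists M, e0; split; auto;
    intros e He; specialize (Hm e He); rewrite ?Rabs_modulus in *; auto.
Qed.

Lemma negligible_plus u v : negligible u -> negligible v -> negligible (fun e => (u e + v e)%C).
Proof.
  rewrite !negligible_iff; intros Hu Hv.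
  apply (negligibleR_le _ _ (negligibleR_plus _ _ Hu Hv)); exists 1; split; [lra|].
  intros e He; rewrite Rabs_modulus; apply Cmod_triangle.
Qed.

Lemma negligible_mult u v : negligible u -> moderate v -> negligible (fun e => (u e * v e)%C).
Proof.
  rewrite negligible_iff, negligible_iff, moderate_iff; intros Hu Hv.
  apply (negligibleR_le _ _ (negligibleR_abs _ (negligibleR_mult _ _ Hu Hv))).
  exists 1; split; [lra|]; intros e He; unfold modulus; rewrite Cmod_mult; apply Rle_refl.
Qed.

Lemma negligible_ext u v : (forall e, u e = v e) -> negligible u -> negligible v.
Proof.
  intros Euv Hu m; destruct (Hu m) as [M [e0 [He0 H]]]; exists M, e0; split; auto.
  intros e He; rewrite <- Euv; auto.
Qed.

Lemma EMsm_mult K u v : EMsm K u -> EMsm K v -> EMsm K (fun e => (u e * v e)%C).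
Proof.
  intros [Ku [Su Mu]] [Kv [Sv Mv]]; split; [|split].
  - destruct K; simpl in *; auto; intros e He; rewrite Ku, Kv by auto; ring.
  - apply smooth_net_mult; auto.
  - rewrite moderate_iff in *.
    apply (moderateR_le _ _ (moderateR_abs _ (moderateR_mult _ _ Mu Mv))).
    exists 1; split; [lra|]; intros e He; unfold modulus; rewrite Cmod_mult; apply Rle_refl.
Qed.

Lemma EMsm_plus K u v : EMsm K u -> EMsm K v -> EMsm K (fun e => (u e + v e)%C).
Proof.
  intros [Ku [Su Mu]] [Kv [Sv Mv]]; split; [|split].
  - destruct K; simpl in *; auto; intros e He; rewrite Ku, Kv by auto; ring.
  - apply smooth_net_plus; auto.
  - rewrite moderate_iff in *.
    apply (moderateR_le _ _ (moderateR_abs _ (moderateR_plus _ _ Mu Mv))).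
    exists 1; split; [lra|]; intros e He; rewrite Rabs_modulus.
    apply (Rle_trans _ _ _ (Cmod_triangle _ _)), Rle_abs.
Qed.

Lemma EMsm_of_KR K u : EMsm KR u -> EMsm K u.
Proof. intros [Ku Hu]; destruct K; split; auto; exact I. Qed.

Lemma moderate_of_EMsm K u : EMsm K u -> moderate u.
Proof. intros [_ [_ Hu]]; exact Hu. Qed.

Lemma in_principal_trans K g h x :
  in_principal K h g -> in_principal K g x -> in_principal K h x.
Proof.
  intros [w [Hw Hg]] [c [Hc Hx]]; exists (fun e => (w e * c e)%C); split.
  - apply EMsm_mult; auto.
  - apply (negligible_ext (fun e => ((x e - g e * c e) + (g e - h e * w e) * c e)%C)).
    + intros e; simpl; ring.
    + apply negligible_plus; auto; apply negligible_mult; auto; eapply moderate_of_EMsm; eauto.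
Qed.

Lemma in_principal_of_in_sum_ideal K r s g x :
  in_principal K g r -> in_principal K g s -> in_sum_ideal K r s x -> in_principal K g x.
Proof.
  intros [w1 [Hw1 Hr]] [w2 [Hw2 Hs]] [c [d [Hc [Hd Hx]]]].
  exists (fun e => (w1 e * c e + w2 e * d e)%C); split.
  - apply EMsm_plus; apply EMsm_mult; auto.
  - apply (negligible_ext (fun e => ((x e - (r e * c e + s e * d e))
        + ((r e - g e * w1 e) * c e + (s e - g e * w2 e) * d e))%C)).
    + intros e; simpl; ring.
    + apply negligible_plus; auto.
      apply negligible_plus; apply negligible_mult; auto; eapply moderate_of_EMsm; eauto.
Qed.

Lemma in_sum_ideal_of_in_principal_add K r s a b x :
  in_principal K r a -> in_principal K s b -> in_principal K (net_add a b) x ->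
  in_sum_ideal K r s x.
Proof.
  intros [u [Hu Ha]] [v [Hv Hb]] [c [Hc Hx]].
  exists (fun e => (u e * c e)%C), (fun e => (v e * c e)%C).
  split; [|split]; [apply EMsm_mult; auto | apply EMsm_mult; auto|].
  apply (negligible_ext (fun e => ((x e - (a e + b e) * c e)
      + ((a e - r e * u e) * c e + (b e - s e * v e) * c e))%C)).
  - intros e; simpl; ring.
  - apply negligible_plus; auto.
    apply negligible_plus; apply negligible_mult; auto; eapply moderate_of_EMsm; eauto.
Qed.

Lemma exp_le_exp x y : x <= y -> exp x <= exp y.
Proof.
  intros Hxy; destruct (Rle_lt_or_eq_dec x y Hxy) as [Hlt | ->];
    [apply Rlt_le, exp_increasing; auto | apply Rle_refl].
Qed.

Lemma le_of_sq_le x y : 0 <= y -> x * x <= y * y -> x <= y.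
Proof. intros Hy Hxy; apply Rsqr_incr_0_var; unfold Rsqr; auto. Qed.

(* Either the damping factor [exp (- G^2 / (Q e^2))] is at least [exp (-1) >= 1/3],
   or [G >= e sqrt Q >= e p X]. *)
Lemma quotient_size_bound X G Q e p :
  0 < e <= 1 -> 0 <= X -> 0 <= G -> 0 < Q -> 0 < p ->
  p * p * (X * X) <= Q -> G * G <= Q ->
  e * p * X * G <= 3 * (G * G + Q * exp (- (G * G / Q / (e * e)))).
Proof.
  intros He HX HG HQ Hp HXQ HGQ.
  set (h := exp (- (G * G / Q / (e * e)))); assert (Hh : 0 < h) by apply exp_pos.
  destruct (Rle_lt_dec (e * e * Q) (G * G)) as [large | small].
  - assert (e * e * (p * p * (X * X)) <= e * e * Q) by (apply Rmult_le_compat_l; nra).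
    assert (e * (p * X) <= G) by (apply le_of_sq_le; nra).
    nra.
  - assert (ratio_lt1 : G * G / Q / (e * e) < 1).
    { unfold Rdiv; apply (Rmult_lt_reg_r (e * e)); [nra|].
      rewrite Rmult_assoc, Rinv_l, Rmult_1_r by nra.
      apply (Rmult_lt_reg_r Q); auto.
      rewrite Rmult_assoc, Rinv_l, Rmult_1_r by nra; nra. }
    assert (h_ge : / 3 <= h).
    { apply (Rle_trans _ (exp (- (1)))).
      - rewrite exp_Ropp; apply Rinv_le_contravar; [apply exp_pos | apply exp_le_3].
      - apply exp_le_exp; lra. }
    assert (p * X * G <= e * Q).
    { apply le_of_sq_le; [nra|].
      apply (Rle_trans _ (Q * (e * e * Q))); [|nra].
      replace (p * X * G * (p * X * G)) with ((p * p * (X * X)) * (G * G)) by ring.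
      apply Rmult_le_compat; nra. }
    assert (e * (p * X * G) <= e * (e * Q)) by (apply Rmult_le_compat_l; lra).
    assert (e * Q <= 1 * Q) by (apply Rmult_le_compat_r; lra).
    assert (e * (e * Q) <= 1 * (e * Q)) by (apply Rmult_le_compat_r; nra).
    assert (Q <= 3 * (Q * h)) by (assert (1 <= 3 * h) by lra; nra).
    nra.
Qed.

Lemma damped_fraction_le G Q h C :
  0 < G -> 0 < Q -> 0 < h -> Q <= C * (G * G) -> Q * h / (G * G + Q * h) <= C * h.
Proof.
  intros HG HQ Hh HQC.
  assert (0 < G * G + Q * h) by nra.
  apply (Rmult_le_reg_r (G * G + Q * h)); auto.
  unfold Rdiv; rewrite Rmult_assoc, Rinv_l, Rmult_1_r by lra.
  assert (HC : 0 < C) by (apply (Rmult_lt_reg_r (G * G)); nra).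
  apply (Rle_trans _ (C * h * (G * G))).
  - replace (C * h * (G * G)) with ((C * (G * G)) * h) by ring; apply Rmult_le_compat_r; lra.
  - apply Rmult_le_compat_l; nra.
Qed.

Lemma damping_le G Q C e :
  0 < e <= 1 -> 0 < G -> 0 < Q -> 0 < C -> Q <= C * (G * G) ->
  exp (- (G * G / Q / (e * e))) <= exp (- / C / e).
Proof.
  intros He HG HQ HC HQC; apply exp_le_exp.
  replace (- / C / e) with (- (/ C / e)) by (field; lra); apply Ropp_le_contravar.
  assert (/ C <= G * G / Q).
  { apply (Rmult_le_reg_r (C * Q)); [nra|].
    replace (/ C * (C * Q)) with Q by (field; lra).
    replace (G * G / Q * (C * Q)) with (C * (G * G)) by (field; lra); auto. }
  assert (0 < / e) by (apply Rinv_0_lt_compat; lra).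
  assert (/ e <= / (e * e)) by (apply Rinv_le_contravar; nra).
  unfold Rdiv; apply (Rle_trans _ (G * G / Q * / e)); [apply Rmult_le_compat_r|]; try lra.
  apply Rmult_le_compat_l; [|auto]; unfold Rdiv; apply Rmult_le_pos; [nra | apply Rlt_le, Rinv_0_lt_compat; auto].
Qed.

(* If [X <= B G + nb], the relative error [Q h / (G^2 + Q h)] of the smooth quotient is
   harmless unless [G] is large compared with [X] and with [ps], in which case
   [Q <= C G^2] and the damping factor [h] is [exp]-small. *)
Lemma quotient_error_bound X G ps e q M nb Q h :
  0 < e <= 1 -> 0 < q <= 1 -> 0 <= X -> 0 <= G -> 0 < ps -> 0 <= M ->
  X <= M / q * G + nb ->
  Q = G * G + (e * q) * (e * q) * (X * X) + ps * ps ->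
  h = exp (- (G * G / Q / (e * e))) ->
  X * (Q * h / (G * G + Q * h))
    <= 2 * Rabs nb + 2 * (M / q) * ps + (2 + 4 * M * M) * X * exp (- / (2 + 4 * M * M) / e).
Proof.
  intros He Hq HX HG Hps HM Hb EQ Eh.
  set (B := M / q) in *; set (C := 2 + 4 * M * M); set (E := exp (- / C / e)).
  assert (HB : 0 <= B) by (unfold B, Rdiv; apply Rmult_le_pos; [lra | apply Rlt_le, Rinv_0_lt_compat; lra]).
  assert (HBq : B * q = M) by (unfold B; field; lra).
  assert (HQ : 0 < Q) by nra.
  assert (Hh : 0 < h) by (rewrite Eh; apply exp_pos).
  assert (HE : 0 < E) by apply exp_pos.
  assert (HC : 2 <= C) by (unfold C; nra).
  set (t := Q * h / (G * G + Q * h)).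
  assert (Ht : 0 <= t <= 1).
  { assert (0 < G * G + Q * h) by nra; unfold t, Rdiv; split.
    - apply Rmult_le_pos; [nra | apply Rlt_le, Rinv_0_lt_compat; auto].
    - apply (Rmult_le_reg_r (G * G + Q * h)); auto.
      rewrite Rmult_assoc, Rinv_l, Rmult_1_r by lra; nra. }
  pose proof (Rle_abs nb); pose proof (Rabs_pos nb).
  assert (0 <= C * X * E) by (apply Rmult_le_pos; nra).
  assert (0 <= 2 * B * ps) by nra.
  assert (X * t <= X) by nra.
  destruct (Rlt_le_dec (2 * B * G) X) as [X_large | X_small]; [lra|].
  destruct (Rlt_le_dec G ps) as [G_small | G_large].
  { assert (B * G <= B * ps) by (apply Rmult_le_compat_l; lra); lra. }
  assert (HG0 : 0 < G) by lra.
  assert (HQC : Q <= C * (G * G)).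
  { assert (q * X <= 2 * M * G) by (rewrite <- HBq; nra).
    assert (0 <= q * X) by nra.
    assert (q * X * (q * X) <= 2 * M * G * (2 * M * G)) by nra.
    assert (e * e * (q * X * (q * X)) <= 1 * (q * X * (q * X))) by (apply Rmult_le_compat_r; nra).
    assert (ps * ps <= G * G) by nra.
    rewrite EQ; unfold C; nra. }
  assert (t <= C * E).
  { apply (Rle_trans _ (C * h)); [apply damped_fraction_le; auto|].
    apply Rmult_le_compat_l; [lra|]; rewrite Eh; apply damping_le; auto; lra. }
  nra.
Qed.

Lemma smoothR_const c : smoothR (fun _ => c).
Proof.
  apply smoothR_iff; exists 1; split; [lra|]; intros n.
  apply derivable_n_on_const, open_near_I.
Qed.

Lemma smooth_net_conj u : smooth_net u -> smooth_net (fun e => Cconj (u e)).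
Proof. intros [u1 u2]; split; simpl; [|apply smoothR_opp]; auto. Qed.

Lemma smooth_net_RtoC f : smoothR f -> smooth_net (fun e => RtoC (f e)).
Proof. intros Hf; split; simpl; [exact Hf | apply smoothR_const]. Qed.

Definition norm2 (u : net) (e : R) : R := Re (u e) * Re (u e) + Im (u e) * Im (u e).

Definition psi (e : R) : R := exp (- 1 / e).

Definition quot_scale (x g : net) (N : nat) (e : R) : R :=
  norm2 g e + e ^ S N * e ^ S N * norm2 x e + psi e * psi e.

Definition quot_den (x g : net) (N : nat) (e : R) : R :=
  norm2 g e + quot_scale x g N e * exp (- (norm2 g e / quot_scale x g N e / (e * e))).

(* A smooth substitute for [x / g]: with [Q = quot_scale], the denominator
   [|g|^2 + Q exp (- |g|^2 / (Q e^2))] is [|g|^2] up to an [exp]-small relative error where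
   [|g|] is not too small, and stays [>= e^O(1) |x| |g|] everywhere (the term [psi^2] in [Q]
   keeps it positive where [x = g = 0]). *)
Definition smooth_quot (x g : net) (N : nat) : net :=
  fun e => (x e * Cconj (g e) * RtoC (/ quot_den x g N e))%C.

Lemma norm2_Cmod u e : norm2 u e = Cmod (u e) * Cmod (u e).
Proof.
  unfold norm2; replace (Cmod (u e) * Cmod (u e)) with (Cmod (u e) ^ 2) by ring.
  rewrite Cmod2_alt; ring.
Qed.

Lemma norm2_nonneg u e : 0 <= norm2 u e.
Proof. unfold norm2; nra. Qed.

Lemma quot_scale_pos x g N e : 0 < e -> 0 < quot_scale x g N e.
Proof.
  intros He; unfold quot_scale.
  pose proof (pow_lt e (S N) He); pose proof (norm2_nonneg g e); pose proof (norm2_nonneg x e).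
  assert (0 < psi e) by apply exp_pos.
  nra.
Qed.

Lemma quot_den_pos x g N e : 0 < e -> 0 < quot_den x g N e.
Proof.
  intros He; unfold quot_den.
  pose proof (norm2_nonneg g e); pose proof (quot_scale_pos x g N e He).
  pose proof (exp_pos (- (norm2 g e / quot_scale x g N e / (e * e)))).
  nra.
Qed.

Lemma smoothR_norm2 u : smooth_net u -> smoothR (norm2 u).
Proof. intros [u1 u2]; unfold norm2; apply smoothR_plus; apply smoothR_mult; auto. Qed.

Lemma smoothR_inv_pos f : smoothR f -> (forall e, 0 < e -> 0 < f e) -> smoothR (fun e => / f e).
Proof. intros Hf Hpos; apply smoothR_inv; auto; intros e He; specialize (Hpos e He); lra. Qed.

Lemma smoothR_psi : smoothR psi.
Proof.
  apply smoothR_exp, (smoothR_mult (fun _ => - 1) (fun e => / e)); [apply smoothR_const|].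
  apply smoothR_inv_pos; [apply smoothR_id | auto].
Qed.

Lemma smoothR_quot_scale x g N : smooth_net x -> smooth_net g -> smoothR (quot_scale x g N).
Proof.
  intros Hx Hg; unfold quot_scale.
  apply smoothR_plus; [apply smoothR_plus|].
  - apply smoothR_norm2; auto.
  - apply smoothR_mult; [apply smoothR_mult; apply smoothR_pow | apply smoothR_norm2; auto].
  - apply smoothR_mult; apply smoothR_psi.
Qed.

Lemma smoothR_quot_den x g N : smooth_net x -> smooth_net g -> smoothR (quot_den x g N).
Proof.
  intros Hx Hg; pose proof (smoothR_quot_scale x g N Hx Hg).
  unfold quot_den; apply smoothR_plus; [apply smoothR_norm2; auto|].
  apply smoothR_mult, smoothR_exp, smoothR_opp; auto.
  apply smoothR_mult; [apply smoothR_mult; [apply smoothR_norm2; auto|] |].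
  - apply smoothR_inv_pos; auto using quot_scale_pos.
  - apply smoothR_inv_pos; [apply smoothR_mult; apply smoothR_id | intros e He; nra].
Qed.

Lemma EMsm_smooth_quot K x g N : EMsm K x -> EMsm K g ->
  K_valued K (smooth_quot x g N) /\ smooth_net (smooth_quot x g N).
Proof.
  intros [Kx [Sx _]] [Kg [Sg _]]; split.
  - destruct K; simpl in *; auto; intros e He; rewrite Kx, Kg by auto; ring.
  - apply smooth_net_mult; [apply smooth_net_mult; auto using smooth_net_conj|].
    apply smooth_net_RtoC, smoothR_inv_pos; auto using smoothR_quot_den, quot_den_pos.
Qed.

Lemma Cmod_smooth_quot x g N e : 0 < e ->
  Cmod (smooth_quot x g N e) = Cmod (x e) * Cmod (g e) / quot_den x g N e.
Proof.
  intros He; pose proof (quot_den_pos x g N e He).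
  unfold smooth_quot; rewrite !Cmod_mult, Cmod_conj, Cmod_R, Rabs_right; [reflexivity|].
  apply Rle_ge, Rlt_le, Rinv_0_lt_compat; auto.
Qed.

Lemma smooth_quot_residual x g N e : 0 < e ->
  (x e - g e * smooth_quot x g N e)%C
  = (x e * RtoC ((quot_den x g N e - norm2 g e) / quot_den x g N e))%C.
Proof.
  intros He; pose proof (quot_den_pos x g N e He).
  unfold smooth_quot, norm2 in *; destruct (x e) as [a b], (g e) as [c d]; simpl in *.
  apply C_eq_parts; simpl; field; lra.
Qed.

Lemma moderate_smooth_quot x g N : moderate (smooth_quot x g N).
Proof.
  apply moderate_iff.
  apply (moderateR_le _ (fun e => 3 * / e ^ S (S N))).
  { apply (moderateR_mult (fun _ => 3) (fun e => / e ^ S (S N)));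
      [apply moderateR_const | apply moderateR_inv_pow]. }
  exists 1; split; [lra|]; intros e He.
  rewrite Rabs_modulus; unfold modulus; rewrite Cmod_smooth_quot by lra.
  pose proof (quot_den_pos x g N e ltac:(lra)) as HD.
  pose proof (pow_lt e (S N) ltac:(lra)) as Hp.
  assert (Hsize : e * e ^ S N * Cmod (x e) * Cmod (g e) <= 3 * quot_den x g N e).
  { unfold quot_den; rewrite !norm2_Cmod.
    pose proof (quot_scale_pos x g N e ltac:(lra)) as HQ.
    apply quotient_size_bound; auto using Cmod_ge_0; unfold quot_scale;
      rewrite !norm2_Cmod; pose proof (pow_lt e (S N) ltac:(lra));
      pose proof (exp_pos (- 1 / e)); unfold psi; nra. }
  change (e ^ S (S N)) with (e * e ^ S N).
  unfold Rdiv; apply (Rmult_le_reg_r (quot_den x g N e)); auto.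
  rewrite Rmult_assoc, Rinv_l, Rmult_1_r by lra.
  apply (Rmult_le_reg_l (e * e ^ S N)); [nra|].
  replace (e * e ^ S N * (3 * / (e * e ^ S N) * quot_den x g N e))
    with (3 * quot_den x g N e) by (field; lra).
  lra.
Qed.

Definition dominated (f g : R -> R) : Prop :=
  exists (N : nat) (M e0 : R) (nb : R -> R), 0 <= M /\ negligibleR nb /\ 0 < e0 <= 1 /\
    forall e, 0 < e <= e0 -> f e <= M / e ^ N * g e + nb e.

Lemma negligible_smooth_quot_residual x g N M e0 nb :
  moderate x -> 0 <= M -> negligibleR nb -> 0 < e0 <= 1 ->
  (forall e, 0 < e <= e0 -> modulus x e <= M / e ^ N * modulus g e + nb e) ->
  negligible (fun e => (x e - g e * smooth_quot x g N e)%C).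
Proof.
  intros Hx HM Hnb He0 Hdom; apply moderate_iff in Hx; apply negligible_iff.
  set (C := 2 + 4 * M * M); assert (HC : 0 < C) by (unfold C; nra).
  apply (negligibleR_le _ (fun e => 2 * Rabs (nb e) + psi e * (2 * M * / e ^ N)
                                     + exp (- / C / e) * (C * modulus x e))).
  { apply negligibleR_plus; [apply negligibleR_plus|].
    - apply negligibleR_scal, negligibleR_abs; auto.
    - apply negligibleR_mult; [exact (negligibleR_exp_inv 1 Rlt_0_1)|].
      apply (moderateR_mult (fun _ => 2 * M) (fun e => / e ^ N));
        [apply moderateR_const | apply moderateR_inv_pow].
    - apply negligibleR_mult; [apply negligibleR_exp_inv, Rinv_0_lt_compat; auto|].
      apply (moderateR_mult (fun _ => C)); [apply moderateR_const | exact Hx]. }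
  exists e0; split; auto; intros e He.
  rewrite Rabs_modulus; unfold modulus; rewrite smooth_quot_residual by lra.
  pose proof (quot_den_pos x g N e ltac:(lra)) as HD.
  pose proof (quot_scale_pos x g N e ltac:(lra)) as HQ.
  rewrite Cmod_mult, Cmod_R, Rabs_right.
  2: { unfold quot_den; apply Rle_ge, Rmult_le_pos; [|apply Rlt_le, Rinv_0_lt_compat; auto].
       pose proof (exp_pos (- (norm2 g e / quot_scale x g N e / (e * e)))); nra. }
  unfold quot_den; rewrite !norm2_Cmod.
  replace (Cmod (g e) * Cmod (g e) + quot_scale x g N e
             * exp (- (Cmod (g e) * Cmod (g e) / quot_scale x g N e / (e * e)))
           - Cmod (g e) * Cmod (g e))
    with (quot_scale x g N e * exp (- (Cmod (g e) * Cmod (g e) / quot_scale x g N e / (e * e))))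
    by ring.
  eapply Rle_trans.
  - apply (quotient_error_bound _ _ (psi e) e (e ^ N) M (nb e));
      [lra | apply pow_unit_interval; lra | apply Cmod_ge_0 | apply Cmod_ge_0
      | apply exp_pos | exact HM | exact (Hdom e He)
      | unfold quot_scale; rewrite !norm2_Cmod; reflexivity | reflexivity].
  - unfold psi, Rdiv; apply Req_le; fold C; ring.
Qed.

Lemma in_principal_of_dominated K g x : EMsm K x -> EMsm K g ->
  dominated (modulus x) (modulus g) -> in_principal K g x.
Proof.
  intros Hx Hg [N [M [e0 [nb [HM [Hnb [He0 Hdom]]]]]]].
  destruct (EMsm_smooth_quot K x g N Hx Hg) as [Kw Sw].
  exists (smooth_quot x g N); split; [split; [|split]; auto using moderate_smooth_quot|].
  eapply negligible_smooth_quot_residual; eauto using moderate_of_EMsm.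
Qed.

Lemma dominated_of_in_principal K g x : in_principal K g x -> dominated (modulus x) (modulus g).
Proof.
  intros [c [[_ [_ Hc]] Hx]]; apply negligible_iff in Hx.
  destruct Hc as [N [M [e0 [He0 Hc]]]].
  exists N, (Rabs M), e0, (modulus (fun e => (x e - g e * c e)%C)).
  split; [apply Rabs_pos | split; [exact Hx | split; [exact He0|]]].
  intros e He; specialize (Hc e He).
  assert (HcM : Cmod (c e) <= Rabs M / e ^ N).
  { apply (Rle_trans _ _ _ Hc); apply Rmult_le_compat_r; [|apply Rle_abs].
    apply Rlt_le, Rinv_0_lt_compat, pow_lt; lra. }
  unfold modulus.
  replace (x e) with ((x e - g e * c e) + g e * c e)%C at 1 by ring.
  eapply Rle_trans; [apply Cmod_triangle|]; rewrite Cmod_mult.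
  pose proof (Cmod_ge_0 (g e)).
  assert (Cmod (g e) * Cmod (c e) <= Cmod (g e) * (Rabs M / e ^ N)) by (apply Rmult_le_compat_l; auto).
  lra.
Qed.

Lemma dominated_of_le f g C nb : 0 <= C -> negligibleR nb ->
  (forall e, 0 < e <= 1 -> f e <= C * g e + nb e) -> dominated f g.
Proof.
  intros HC Hnb Hfg; exists 0%nat, C, 1, nb; do 3 (split; [auto; lra|]).
  intros e He; simpl; rewrite Rdiv_1_r; auto.
Qed.

Lemma dominated_min f g h : (forall e, 0 <= g e) -> (forall e, 0 <= h e) ->
  dominated f g -> dominated f h -> dominated f (fun e => Rmin (g e) (h e)).
Proof.
  intros Hg Hh [N1 [M1 [e1 [n1 [HM1 [Hn1 [He1 H1]]]]]]] [N2 [M2 [e2 [n2 [HM2 [Hn2 [He2 H2]]]]]]].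
  destruct (Rmin_unit_interval e1 e2 He1 He2) as [He Hboth].
  exists (N1 + N2)%nat, (M1 + M2), (Rmin e1 e2), (fun e => Rabs (n1 e) + Rabs (n2 e)).
  split; [lra | split; [apply negligibleR_plus; apply negligibleR_abs; auto | split; auto]].
  intros e Hee; destruct (Hboth e Hee) as [Hee1 Hee2].
  specialize (H1 e Hee1); specialize (H2 e Hee2).
  assert (HN1 : M1 / e ^ N1 <= (M1 + M2) / e ^ (N1 + N2)).
  { apply Rmult_le_compat; [lra | apply Rlt_le, Rinv_0_lt_compat, pow_lt; lra | lra|].
    apply Rinv_le_contravar; [apply pow_lt; lra | apply pow_le_pow_unit; [lra | lia]]. }
  assert (HN2 : M2 / e ^ N2 <= (M1 + M2) / e ^ (N1 + N2)).
  { apply Rmult_le_compat; [lra | apply Rlt_le, Rinv_0_lt_compat, pow_lt; lra | lra|].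
    apply Rinv_le_contravar; [apply pow_lt; lra | apply pow_le_pow_unit; [lra | lia]]. }
  pose proof (Rle_abs (n1 e)); pose proof (Rle_abs (n2 e)).
  pose proof (Rabs_pos (n1 e)); pose proof (Rabs_pos (n2 e)).
  pose proof (Hg e); pose proof (Hh e).
  unfold Rmin; destruct (Rle_dec (g e) (h e)).
  - assert (M1 / e ^ N1 * g e <= (M1 + M2) / e ^ (N1 + N2) * g e) by (apply Rmult_le_compat_r; auto).
    lra.
  - assert (M2 / e ^ N2 * h e <= (M1 + M2) / e ^ (N1 + N2) * h e) by (apply Rmult_le_compat_r; auto).
    lra.
Qed.

Lemma dominated_trans f g h : dominated f g -> dominated g h -> dominated f h.
Proof.
  intros [N1 [M1 [e1 [n1 [HM1 [Hn1 [He1 H1]]]]]]] [N2 [M2 [e2 [n2 [HM2 [Hn2 [He2 H2]]]]]]].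
  destruct (Rmin_unit_interval e1 e2 He1 He2) as [He Hboth].
  exists (N1 + N2)%nat, (M1 * M2), (Rmin e1 e2), (fun e => n2 e * (M1 * / e ^ N1) + n1 e).
  split; [nra | split; [|split; auto]].
  { apply negligibleR_plus; auto; apply negligibleR_mult; auto.
    apply (moderateR_mult (fun _ => M1)); [apply moderateR_const | apply moderateR_inv_pow]. }
  intros e Hee; destruct (Hboth e Hee) as [Hee1 Hee2].
  specialize (H1 e Hee1); specialize (H2 e Hee2).
  assert (Hq : 0 <= M1 / e ^ N1).
  { apply Rmult_le_pos; auto; apply Rlt_le, Rinv_0_lt_compat, pow_lt; lra. }
  assert (M1 / e ^ N1 * g e <= M1 / e ^ N1 * (M2 / e ^ N2 * h e + n2 e))
    by (apply Rmult_le_compat_l; auto).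
  replace (M1 * M2 / e ^ (N1 + N2) * h e + (n2 e * (M1 * / e ^ N1) + n1 e))
    with (M1 / e ^ N1 * (M2 / e ^ N2 * h e + n2 e) + n1 e).
  - lra.
  - rewrite pow_add; field; split; apply pow_nonzero; lra.
Qed.

Lemma Cmod_sub_RtoC (u : C) (c : R) :
  Re u - Cmod (u - RtoC c) <= c <= Re u + Cmod (u - RtoC c) /\
  Cmod u <= Rabs c + Cmod (u - RtoC c) /\ Rabs c <= Cmod u + Cmod (u - RtoC c).
Proof.
  pose proof (re_le_Cmod (u - RtoC c)) as Hre.
  replace (Re (u - RtoC c)) with (Re u - c) in Hre by (destruct u; simpl; ring).
  apply Rabs_le_between in Hre; split; [lra | split].
  - replace u with (u - RtoC c + RtoC c)%C at 1 by ring.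
    rewrite <- (Cmod_R c), Rplus_comm; apply Cmod_triangle.
  - rewrite <- (Cmod_R c).
    replace (RtoC c) with (u + - (u - RtoC c))%C at 1 by ring.
    rewrite <- (Cmod_opp (u - RtoC c)); apply Cmod_triangle.
Qed.

Lemma Rabs_cases t : (0 <= t /\ Rabs t = t) \/ (t < 0 /\ Rabs t = - t).
Proof. unfold Rabs; destruct (Rcase_abs t); [right | left]; split; lra. Qed.

(* Pointwise form of (i) and (ii): [a], [b], [mx], [mn] are [|r|], [|s|], [|r| \/ |s|]
   and [|r| /\ |s|] up to the errors collected in [err]. *)
Lemma modulus_relations (r s a b mx mn : C) :
  let err := Cmod (a - RtoC (Cmod r)) + Cmod (b - RtoC (Cmod s))
           + Cmod (mx - RtoC (Rmax (Re a) (Re b))) + Cmod (mn - RtoC (Rmin (Re a) (Re b))) in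
  Cmod r <= Cmod (a + b) + err /\ Cmod s <= Cmod (a + b) + err /\
  Cmod a <= Cmod r + err /\ Cmod b <= Cmod s + err /\
  Cmod (a + b) <= 2 * Cmod mx + 3 * err /\ Cmod mx <= Cmod (a + b) + 2 * err /\
  Cmod mn <= Cmod r + err /\ Cmod mn <= Cmod s + err /\
  Rmin (Cmod r) (Cmod s) <= Cmod mn + err.
Proof.
  intros err.
  pose proof (Cmod_sub_RtoC a (Cmod r)); pose proof (Cmod_sub_RtoC b (Cmod s)).
  pose proof (Cmod_sub_RtoC mx (Rmax (Re a) (Re b))).
  pose proof (Cmod_sub_RtoC mn (Rmin (Re a) (Re b))).
  rewrite !Rabs_right in * by (apply Rle_ge, Cmod_ge_0).
  pose proof (Cmod_ge_0 (a - RtoC (Cmod r))); pose proof (Cmod_ge_0 (b - RtoC (Cmod s))).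
  pose proof (Cmod_ge_0 (mx - RtoC (Rmax (Re a) (Re b)))).
  pose proof (Cmod_ge_0 (mn - RtoC (Rmin (Re a) (Re b)))).
  pose proof (Cmod_ge_0 r); pose proof (Cmod_ge_0 s); pose proof (Cmod_triangle a b).
  assert (Re a + Re b <= Cmod (a + b)).
  { replace (Re a + Re b) with (Re (a + b)) by (destruct a, b; reflexivity).
    apply (Rle_trans _ _ _ (Rle_abs _)), re_le_Cmod. }
  destruct (Rabs_cases (Rmax (Re a) (Re b))), (Rabs_cases (Rmin (Re a) (Re b)));
    unfold err, Rmax, Rmin in *; destruct (Rle_dec (Re a) (Re b)), (Rle_dec (Cmod r) (Cmod s));
    repeat split; lra.
Qed.

Section ModulusIdeals.

Variables (K : Kfield) (r s a b mx mn : net).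
Hypotheses (Hr : EMsm K r) (Hs : EMsm K s)
  (Ha : is_abs r a) (Hb : is_abs s b) (Hmx : is_max a b mx) (Hmn : is_min a b mn).

Let err (e : R) : R :=
  Cmod (a e - RtoC (Cmod (r e))) + Cmod (b e - RtoC (Cmod (s e)))
  + Cmod (mx e - RtoC (Rmax (Re (a e)) (Re (b e))))
  + Cmod (mn e - RtoC (Rmin (Re (a e)) (Re (b e)))).

Lemma negligible_err : negligibleR err.
Proof.
  destruct Ha as [_ Ea], Hb as [_ Eb], Hmx as [_ Emx], Hmn as [_ Emn].
  apply negligible_iff in Ea, Eb, Emx, Emn.
  repeat apply negligibleR_plus; assumption.
Qed.

Lemma dominated_up_to_err f g : (forall e, f e <= 2 * g e + 3 * err e) -> dominated f g.
Proof.
  intros Hfg; apply (dominated_of_le f g 2 (fun e => 3 * err e)); auto; [lra|].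
  apply negligibleR_scal, negligible_err.
Qed.

Lemma relations_at e :
  0 <= Cmod (r e) /\ 0 <= Cmod (s e) /\ 0 <= Cmod (a e + b e) /\ 0 <= Cmod (mn e) /\
  0 <= err e /\
  Cmod (r e) <= Cmod (a e + b e) + err e /\ Cmod (s e) <= Cmod (a e + b e) + err e /\
  Cmod (a e) <= Cmod (r e) + err e /\ Cmod (b e) <= Cmod (s e) + err e /\
  Cmod (a e + b e) <= 2 * Cmod (mx e) + 3 * err e /\
  Cmod (mx e) <= Cmod (a e + b e) + 2 * err e /\
  Cmod (mn e) <= Cmod (r e) + err e /\ Cmod (mn e) <= Cmod (s e) + err e /\
  Rmin (Cmod (r e)) (Cmod (s e)) <= Cmod (mn e) + err e.
Proof.
  pose proof (modulus_relations (r e) (s e) (a e) (b e) (mx e) (mn e)).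
  pose proof (Cmod_ge_0 (r e)); pose proof (Cmod_ge_0 (s e)); pose proof (Cmod_ge_0 (a e + b e)).
  pose proof (Cmod_ge_0 (mn e)).
  assert (0 <= err e) by (unfold err; repeat apply Rplus_le_le_0_compat; apply Cmod_ge_0).
  unfold err in *; repeat split; lra.
Qed.

Ltac by_relations := apply dominated_up_to_err; intros e;
  pose proof (relations_at e); unfold modulus, net_add; lra.

Lemma EMsm_add : EMsm K (net_add a b).
Proof. apply EMsm_plus; apply EMsm_of_KR; [apply Ha | apply Hb]. Qed.

Lemma in_sum_ideal_iff_add x : EMsm K x ->
  in_sum_ideal K r s x <-> in_principal K (net_add a b) x.
Proof.
  intros Hx; pose proof EMsm_add; split.
  - apply in_principal_of_in_sum_ideal; apply in_principal_of_dominated; auto; by_relations.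
  - apply in_sum_ideal_of_in_principal_add; apply in_principal_of_dominated; auto;
      solve [apply EMsm_of_KR; apply Ha || apply Hb | by_relations].
Qed.

Lemma in_principal_add_iff_max x :
  in_principal K (net_add a b) x <-> in_principal K mx x.
Proof.
  pose proof EMsm_add; assert (EMsm K mx) by (apply EMsm_of_KR, Hmx).
  split; apply in_principal_trans, in_principal_of_dominated; auto; by_relations.
Qed.

Lemma in_principal_inter_iff_min x : EMsm K x ->
  in_principal K r x /\ in_principal K s x <-> in_principal K mn x.
Proof.
  intros Hx; assert (EMsm K mn) by (apply EMsm_of_KR, Hmn); split.
  - intros [Hxr Hxs]; apply in_principal_of_dominated; auto.
    apply (dominated_trans _ (fun e => Rmin (Cmod (r e)) (Cmod (s e)))).
    + apply (dominated_min _ (modulus r) (modulus s));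
        [intros; apply Cmod_ge_0 | intros; apply Cmod_ge_0 | |];
        eapply dominated_of_in_principal; eauto.
    + by_relations.
  - intros Hxmn; split; apply (in_principal_trans K mn); auto;
      apply in_principal_of_dominated; auto; by_relations.
Qed.

End ModulusIdeals.

Theorem proposition4p26 :
  forall (K : Kfield) (r s a b mx mn : net),
    EMsm K r -> EMsm K s ->
    is_abs r a -> is_abs s b ->
    is_max a b mx -> is_min a b mn ->
    forall x : net, EMsm K x ->
      ((in_sum_ideal K r s x <-> in_principal K (net_add a b) x) /\
       (in_principal K (net_add a b) x <-> in_principal K mx x)) /\
      ((in_principal K r x /\ in_principal K s x) <-> in_principal K mn x).
Proof.
  intros K r s a b mx mn Hr Hs Ha Hb Hmx Hmn x Hx; split; [split|].
  - apply (in_sum_ideal_iff_add K r s a b mx mn); auto.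
  - apply (in_principal_add_iff_max K r s a b mx mn); auto.
  - apply (in_principal_inter_iff_min K r s a b mx mn); auto.
Qed.
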